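(* Let $\mathfrak{R}$ be an alternative ring containing a nontrivial idempotent $e_1$, with Peirce decomposition $\mathfrak{R}=\mathfrak{R}_{11}\oplus\mathfrak{R}_{12}\oplus\mathfrak{R}_{21}\oplus\mathfrak{R}_{22}$, which satisfies: (i) if $a_{11}\in\mathfrak{R}_{11}$, $a_{22}\in\mathfrak{R}_{22}$ and $[a_{11}+a_{22},\mathfrak{R}_{12}]=0$, then $a_{11}+a_{22}\in\mathcal{Z}(\mathfrak{R})$; (ii) if $a_{11}\in\mathfrak{R}_{11}$, $a_{22}\in\mathfrak{R}_{22}$ and $[a_{11}+a_{22},\mathfrak{R}_{21}]=0$, then $a_{11}+a_{22}\in\mathcal{Z}(\mathfrak{R})$. Then every multiplicative Lie $3$-derivation $\mathcal{D}$ of $\mathfrak{R}$ is almost additive, i.e. $\mathcal{D}(a+b)-\mathcal{D}(a)-\mathcal{D}(b)\in\mathcal{Z}(\mathfrak{R})$ for all $a,b\in\mathfrak{R}$.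
   Context: Rings are not assumed associative or unital. $\mathfrak{R}$ is alternative if $(x,x,y)=0=(y,x,x)$ for all $x,y$, where $(x,y,z)=(xy)z-x(yz)$. $[x,y]=xy-yx$; $\mathcal{Z}(\mathfrak{R})=\{r: [r,x]=0\ \forall x\in\mathfrak{R}\}$. A map $\mathcal{D}\colon\mathfrak{R}\to\mathfrak{R}$, not necessarily additive, is a multiplicative Lie $3$-derivation if $\mathcal{D}([[x,y],w])=[[\mathcal{D}(x),y],w]+[[x,\mathcal{D}(y)],w]+[[x,y],\mathcal{D}(w)]$ for all $x,y,w\in\mathfrak{R}$. A nontrivial idempotent is $e_1\ne0$ with $e_1^2=e_1$ which is not a multiplicative identity. With $e_2a:=a-e_1a$, $ae_2:=a-ae_1$, set $\mathfrak{R}_{ij}=e_i\mathfrak{R}e_j$ ($i,j=1,2$), so $\mathfrak{R}=\bigoplus_{i,j}\mathfrak{R}_{ij}$. *)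

(* Non-associative rings are not in MathComp (whose rings are
   associative and unital), so we model a ring as an abelian group
   (zmodType) with a biadditive multiplication [mul]. *)
From mathcomp Require Import all_boot all_order all_algebra.
Set Implicit Arguments. Unset Strict Implicit. Unset Printing Implicit Defensive.
Import GRing.Theory.
Local Open Scope ring_scope.

Section NonAssoc.
Variables (R : zmodType) (mul : R -> R -> R).

Definition nonassoc_ring : Prop :=
  (forall x y z, mul (x + y) z = mul x z + mul y z) /\
  (forall x y z, mul x (y + z) = mul x y + mul x z).

Definition assoc (x y z : R) : R := mul (mul x y) z - mul x (mul y z).

Definition alternative : Prop :=
  forall x y, assoc x x y = 0 /\ assoc y x x = 0.

Definition commr (x y : R) : R := mul x y - mul y x.

Definition central (r : R) : Prop := forall x, commr r x = 0.

Definition nontrivial_idempotent (e : R) : Prop :=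
  e <> 0 /\ mul e e = e /\ ~ (forall x, mul e x = x /\ mul x e = x).

(* e_i a and a e_j, with e_2 a := a - e_1 a, a e_2 := a - a e_1 *)
Definition lmul_e (e : R) (i : bool) (a : R) : R :=
  if i then mul e a else a - mul e a.
Definition rmul_e (e : R) (j : bool) (a : R) : R :=
  if j then mul a e else a - mul a e.

(* Peirce component R_ij = e_i R e_j  (index true = 1, false = 2) *)
Definition peirce (e : R) (i j : bool) (x : R) : Prop :=
  exists a, x = rmul_e e j (lmul_e e i a).

Definition lie3_derivation (D : R -> R) : Prop :=
  forall x y w,
    D (commr (commr x y) w) =
      commr (commr (D x) y) w + commr (commr x (D y)) w
      + commr (commr x y) (D w).

End NonAssoc.

(* Write δ(a, b) := D(a + b) - D a - D b.  Because D is a Lie 3-derivation, δ commutes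
   with double commutators: [[δ(a, b), y], w] = δ([[a, y], w], [[b, y], w]), and likewise
   [[y, w], δ(a, b)] = δ([[y, w], a], [[y, w], b]).  In an alternative ring with idempotent e
   the map x |-> [[x, e], e] projects onto R12 + R21, so [[δ(a, b), e], e] is the defect of
   two off-diagonal elements.  Expanding D [[e + a, e - b], e] for off-diagonal a, b (once
   δ(e, a) and δ(e, -b) are known to be central, by (i) and (ii)) shows that D is additive on
   R12 + R21; hence δ(a, b) lies in R11 + R22.  For x in R12, [x, δ(a, b)] = [[e, x], δ(a, b)]
   is again a defect, so it lies both in R11 + R22 and in R12, hence vanishes, and (i) makes
   δ(a, b) central. *)

From mathcomp Require Import all_boot all_order all_algebra.
Set Implicit Arguments. Unset Strict Implicit.
Import GRing.Theory.
Local Open Scope ring_scope.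

(* [ring] needs a commutative ring; identities in a bare [zmodType] are decided here by
   reifying both sides and comparing their integer coefficient vectors. *)
Section ZmoduleNormalization.
Variable V : zmodType.

Inductive zexpr := ZVar of nat | ZZero | ZAdd of zexpr & zexpr | ZOpp of zexpr.

Fixpoint zexpr_eval (env : seq V) (t : zexpr) : V :=
  match t with
  | ZVar n => nth 0 env n
  | ZZero => 0
  | ZAdd t1 t2 => zexpr_eval env t1 + zexpr_eval env t2
  | ZOpp t1 => - zexpr_eval env t1
  end.

Fixpoint coefs_add (c d : seq int) : seq int :=
  match c, d with
  | [::], _ => d
  | _, [::] => c
  | a :: c', b :: d' => (a + b) :: coefs_add c' d'
  end.

Fixpoint zexpr_coefs (t : zexpr) : seq int :=
  match t with
  | ZVar n => rcons (nseq n 0) 1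
  | ZZero => [::]
  | ZAdd t1 t2 => coefs_add (zexpr_coefs t1) (zexpr_coefs t2)
  | ZOpp t1 => map -%R (zexpr_coefs t1)
  end.

Fixpoint coefs_eval (env : seq V) (c : seq int) : V :=
  match c with
  | [::] => 0
  | a :: c' => head 0 env *~ a + coefs_eval (behead env) c'
  end.

Lemma coefs_eval_add env c d :
  coefs_eval env (coefs_add c d) = coefs_eval env c + coefs_eval env d.
Proof.
elim: c d env => [|a c IH] [|b d] env /=; rewrite ?add0r ?addr0 //.
by rewrite IH mulrzDr addrACA.
Qed.

Lemma coefs_eval_opp env c : coefs_eval env (map -%R c) = - coefs_eval env c.
Proof.
elim: c env => [|a c IH] env /=; first by rewrite oppr0.
by rewrite IH mulrNz opprD.
Qed.

Lemma coefs_eval_var env n : coefs_eval env (rcons (nseq n 0) 1) = nth 0 env n.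
Proof.
elim: n env => [|n IH] [|x env] /=; rewrite ?addr0 ?IH ?mulr0z ?add0r ?nth_nil //.
Qed.

Lemma zexpr_evalE env t : zexpr_eval env t = coefs_eval env (zexpr_coefs t).
Proof.
elim: t => [n||t1 IH1 t2 IH2|t1 IH1] /=.
- by rewrite coefs_eval_var.
- by [].
- by rewrite coefs_eval_add IH1 IH2.
- by rewrite coefs_eval_opp IH1.
Qed.

Lemma coefs_eval_eq0 env c : all (eq_op^~ 0) c -> coefs_eval env c = 0.
Proof.
by elim: c env => [|a c IH] env //= /andP[/eqP -> /IH ->]; rewrite mulr0z addr0.
Qed.

Lemma zexpr_eval_eq env t1 t2 :
  all (eq_op^~ 0) (zexpr_coefs (ZAdd t1 (ZOpp t2))) ->
  zexpr_eval env t1 = zexpr_eval env t2.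
Proof.
move=> /(coefs_eval_eq0 env); rewrite -zexpr_evalE /= => /eqP.
by rewrite subr_eq0 => /eqP.
Qed.

End ZmoduleNormalization.

Ltac zatoms t l :=
  lazymatch t with
  | @Algebra.add _ ?a ?b => let l1 := zatoms a l in zatoms b l1
  | @Algebra.opp _ ?a => zatoms a l
  | @Algebra.zero _ => l
  | _ => lazymatch l with
         | context [cons t _] => l
         | _ => constr:(cons t l)
         end
  end.

Ltac zindex x l :=
  lazymatch l with
  | cons x _ => constr:(O)
  | cons _ ?l' => let n := zindex x l' in constr:(S n)
  end.

Ltac zreify t l :=
  lazymatch t with
  | @Algebra.add _ ?a ?b =>
      let ra := zreify a l in let rb := zreify b l in constr:(ZAdd ra rb)
  | @Algebra.opp _ ?a => let ra := zreify a l in constr:(ZOpp ra)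
  | @Algebra.zero _ => constr:(ZZero)
  | _ => let n := zindex t l in constr:(ZVar n)
  end.

Ltac zmodule :=
  lazymatch goal with
  | |- @eq ?T ?L ?R =>
      let l := zatoms L (@nil T) in
      let l := zatoms R l in
      let rl := zreify L l in
      let rr := zreify R l in
      change (zexpr_eval l rl = zexpr_eval l rr);
      apply: zexpr_eval_eq; vm_compute; reflexivity
  end.

Lemma eq_of_sub_eq (V : zmodType) (a b x y : V) : a = b -> x - y = a - b -> x = y.
Proof. by move=> -> /eqP; rewrite subrr subr_eq0 => /eqP. Qed.

Section NonassociativeRing.
Variables (R : zmodType) (mul : R -> R -> R).
Hypothesis mul_biadditive : nonassoc_ring mul.

Local Notation "x ⋆ y" := (mul x y) (at level 40, left associativity).
Local Notation "[ x , y ]" := (commr mul x y).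

Lemma mulDx x y z : (x + y) ⋆ z = x ⋆ z + y ⋆ z.
Proof. exact: mul_biadditive.1. Qed.

Lemma mulxD x y z : x ⋆ (y + z) = x ⋆ y + x ⋆ z.
Proof. exact: mul_biadditive.2. Qed.

Lemma mul0x x : 0 ⋆ x = 0.
Proof. by apply: (addrI (0 ⋆ x)); rewrite -mulDx !addr0. Qed.

Lemma mulx0 x : x ⋆ 0 = 0.
Proof. by apply: (addrI (x ⋆ 0)); rewrite -mulxD !addr0. Qed.

Lemma mulNx x y : (- x) ⋆ y = - (x ⋆ y).
Proof. by apply/eqP; rewrite -addr_eq0 -mulDx addNr mul0x. Qed.

Lemma mulxN x y : x ⋆ (- y) = - (x ⋆ y).
Proof. by apply/eqP; rewrite -addr_eq0 -mulxD addNr mulx0. Qed.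

Ltac mul_expand := rewrite /assoc /commr;
  repeat progress rewrite ?mulDx ?mulxD ?mulNx ?mulxN ?mul0x ?mulx0.

Lemma commrDl x y z : [x + y, z] = [x, z] + [y, z].
Proof. by mul_expand; zmodule. Qed.

Lemma commrDr x y z : [x, y + z] = [x, y] + [x, z].
Proof. by mul_expand; zmodule. Qed.

Lemma commrNl x y : [- x, y] = - [x, y].
Proof. by mul_expand; zmodule. Qed.

Lemma commr0l x : [0, x] = 0.
Proof. by mul_expand; zmodule. Qed.

Lemma commr0r x : [x, 0] = 0.
Proof. by mul_expand; zmodule. Qed.

Lemma commrC x y : [x, y] = - [y, x].
Proof. by mul_expand; zmodule. Qed.

Lemma commrr x : [x, x] = 0.
Proof. exact: subrr. Qed.

Lemma commr2D p1 p2 q1 q2 w :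
  [[p1 + p2, q1 + q2], w] = [[p1, q1], w] + [[p1, q2], w] + [[p2, q1], w] + [[p2, q2], w].
Proof. by mul_expand; zmodule. Qed.

Lemma central_mulC z x : central mul z -> z ⋆ x = x ⋆ z.
Proof. by move=> /(_ x) /eqP; rewrite subr_eq0 => /eqP. Qed.

Lemma assocDl x y z w : assoc mul (x + y) z w = assoc mul x z w + assoc mul y z w.
Proof. by mul_expand; zmodule. Qed.

Lemma assocDm x y z w : assoc mul x (y + z) w = assoc mul x y w + assoc mul x z w.
Proof. by mul_expand; zmodule. Qed.

Lemma assocDr x y z w : assoc mul x y (z + w) = assoc mul x y z + assoc mul x y w.
Proof. by mul_expand; zmodule. Qed.

Section Lie3Derivation.
Variable D : R -> R.
Hypothesis D_lie3 : lie3_derivation mul D.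

Definition add_defect a b := D (a + b) - D a - D b.
Local Notation δ := add_defect.

Lemma lie3_derivation0 : D 0 = 0.
Proof. by have := D_lie3 0 0 0; rewrite !(commr0l, commr0r) !addr0. Qed.

Lemma add_defect_commr2l a b y w : [[δ a b, y], w] = δ [[a, y], w] [[b, y], w].
Proof. by rewrite /add_defect -!commrDl !D_lie3; mul_expand; zmodule. Qed.

Lemma add_defect_commr2r a b y w : [[y, w], δ a b] = δ [[y, w], a] [[y, w], b].
Proof. by rewrite /add_defect -commrDr !D_lie3; mul_expand; zmodule. Qed.

Lemma add_defect0l a : δ 0 a = 0.
Proof. by rewrite /add_defect add0r lie3_derivation0 subr0 subrr. Qed.

Lemma add_defect0r a : δ a 0 = 0.
Proof. by rewrite /add_defect addr0 lie3_derivation0 subr0 subrr. Qed.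

Lemma lie3_derivation_split p1 p2 q1 q2 w :
    central mul (δ p1 p2) -> central mul (δ q1 q2) ->
  D [[p1 + p2, q1 + q2], w] =
    D [[p1, q1], w] + D [[p1, q2], w] + D [[p2, q1], w] + D [[p2, q2], w].
Proof.
rewrite !D_lie3.
have -> : D (p1 + p2) = δ p1 p2 + D p1 + D p2 by rewrite /add_defect; zmodule.
have -> : D (q1 + q2) = δ q1 q2 + D q1 + D q2 by rewrite /add_defect; zmodule.
move: (δ p1 p2) (δ q1 q2) => zp zq /central_mulC zpC /central_mulC zqC.
by mul_expand; rewrite !zpC -!zqC; zmodule.
Qed.

End Lie3Derivation.

Section Alternative.
Hypothesis mul_alternative : alternative mul.

Lemma assoc_swapl x y z : assoc mul x y z = - assoc mul y x z.
Proof.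
have := (mul_alternative (x + y) z).1.
rewrite assocDl !assocDm (mul_alternative x z).1 (mul_alternative y z).1 add0r addr0.
by move/eqP; rewrite addr_eq0 => /eqP.
Qed.

Lemma assoc_swapr x y z : assoc mul x y z = - assoc mul x z y.
Proof.
have := (mul_alternative (y + z) x).2.
rewrite assocDm !assocDr (mul_alternative y x).2 (mul_alternative z x).2 add0r addr0.
by move/eqP; rewrite addr_eq0 => /eqP.
Qed.

Lemma assoc_flexible x y : assoc mul x y x = 0.
Proof. by rewrite assoc_swapr (mul_alternative x y).1 oppr0. Qed.

Lemma assoc_flex x y z : assoc mul x y z = - assoc mul z y x.
Proof. by rewrite assoc_swapl assoc_swapr opprK assoc_swapl. Qed.

Section Idempotent.
Variable e : R.
Hypothesis e_idem : e ⋆ e = e.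

Lemma mul_e_ex x : e ⋆ (e ⋆ x) = e ⋆ x.
Proof.
have := (mul_alternative e x).1.
by rewrite /assoc e_idem => /eqP; rewrite subr_eq0 eq_sym => /eqP.
Qed.

Lemma mul_xe_e x : x ⋆ e ⋆ e = x ⋆ e.
Proof.
have := (mul_alternative e x).2.
by rewrite /assoc e_idem => /eqP; rewrite subr_eq0 => /eqP.
Qed.

Lemma mul_e_xe x : e ⋆ (x ⋆ e) = e ⋆ x ⋆ e.
Proof. by have := assoc_flexible e x; move/eqP; rewrite subr_eq0 eq_sym => /eqP. Qed.

Lemma mul_e_mul x y : e ⋆ (x ⋆ y) = e ⋆ x ⋆ y + x ⋆ e ⋆ y - x ⋆ (e ⋆ y).
Proof. by apply: (eq_of_sub_eq (esym (assoc_swapl e x y))); mul_expand; zmodule. Qed.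

Lemma mul_mul_e x y : x ⋆ y ⋆ e = x ⋆ (y ⋆ e) - x ⋆ e ⋆ y + x ⋆ (e ⋆ y).
Proof. by apply: (eq_of_sub_eq (assoc_swapr x y e)); mul_expand; zmodule. Qed.

Ltac e_simpl := repeat progress (mul_expand; rewrite ?e_idem ?mul_e_ex ?mul_xe_e ?mul_e_xe).

Definition in_peirce (i j : bool) x :=
  e ⋆ x = (if i then x else 0) /\ x ⋆ e = (if j then x else 0).

Definition peirce_proj (i j : bool) x := rmul_e mul e j (lmul_e mul e i x).

Local Notation in11 := (in_peirce true true).
Local Notation in12 := (in_peirce true false).
Local Notation in21 := (in_peirce false true).
Local Notation in22 := (in_peirce false false).
Local Notation offdiag x := (in12 x \/ in21 x).
Local Notation pr11 := (peirce_proj true true).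
Local Notation pr12 := (peirce_proj true false).
Local Notation pr21 := (peirce_proj false true).
Local Notation pr22 := (peirce_proj false false).

Ltac peirce_eval ex xe ey ye :=
  mul_expand; rewrite /= ?mul_e_mul ?mul_mul_e ?ex ?xe ?ey ?ye; mul_expand; zmodule.

Lemma in_peirce_proj i j x : in_peirce i j (peirce_proj i j x).
Proof.
by rewrite /peirce_proj /rmul_e /lmul_e; case: i; case: j; split; e_simpl; zmodule.
Qed.

Lemma peirceP i j x : peirce mul e i j x <-> in_peirce i j x.
Proof.
split=> [[a ->]|]; first exact: in_peirce_proj.
rewrite /in_peirce /rmul_e /lmul_e => -[ex xe]; exists x.
by case: i ex; case: j xe => /= xe ex; mul_expand; rewrite ?ex ?xe; mul_expand; zmodule.
Qed.

Lemma in_peirceD i j x y : in_peirce i j x -> in_peirce i j y -> in_peirce i j (x + y).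
Proof. by rewrite /in_peirce mulxD mulDx => -[-> ->] [-> ->]; case: i; case: j; rewrite ?addr0. Qed.

Lemma in_peirceN i j x : in_peirce i j x -> in_peirce i j (- x).
Proof. by rewrite /in_peirce mulxN mulNx => -[-> ->]; case: i; case: j; rewrite ?oppr0. Qed.

Lemma peirce_decomp x : x = pr11 x + pr12 x + pr21 x + pr22 x.
Proof. by rewrite /peirce_proj /rmul_e /lmul_e; mul_expand; zmodule. Qed.

Lemma commr2_e x : [[x, e], e] = pr12 x + pr21 x.
Proof. by rewrite /peirce_proj /rmul_e /lmul_e; e_simpl; zmodule. Qed.

Lemma peirce_diag x : [[x, e], e] = 0 -> x = pr11 x + pr22 x.
Proof.
rewrite commr2_e => x_offdiag0.
by rewrite {1}(peirce_decomp x) -[_ + pr21 x]addrA x_offdiag0 addr0.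
Qed.

Lemma peirce_mul12_21 x y : in12 x -> in21 y -> in11 (x ⋆ y) /\ in22 (y ⋆ x).
Proof.
move=> [/= ex xe] [/= ey ye].
by do 2!split; peirce_eval ex xe ey ye.
Qed.

Lemma peirce_mul12_12 x y : in12 x -> in12 y -> in21 (x ⋆ y).
Proof.
move=> [/= ex xe] [/= ey ye].
by split; peirce_eval ex xe ey ye.
Qed.

Lemma peirce_mul21_21 x y : in21 x -> in21 y -> in12 (x ⋆ y).
Proof.
move=> [/= ex xe] [/= ey ye].
by split; peirce_eval ex xe ey ye.
Qed.

Lemma peirce_mul11_12 x y : in11 x -> in12 y -> in12 (x ⋆ y) /\ y ⋆ x = 0.
Proof.
move=> [/= ex xe] [/= ey ye]; split; first by split; peirce_eval ex xe ey ye.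
by apply: (eq_of_sub_eq (esym (assoc_flex y e x))); peirce_eval ex xe ey ye.
Qed.

Lemma peirce_mul22_12 x y : in22 x -> in12 y -> in12 (y ⋆ x) /\ x ⋆ y = 0.
Proof.
move=> [/= ex xe] [/= ey ye]; split; first by split; peirce_eval ex xe ey ye.
by apply: (eq_of_sub_eq (esym (assoc_flex x e y))); peirce_eval ex xe ey ye.
Qed.

Lemma peirce_mul11_21 x y : in11 x -> in21 y -> in21 (y ⋆ x) /\ x ⋆ y = 0.
Proof.
move=> [/= ex xe] [/= ey ye]; split; first by split; peirce_eval ex xe ey ye.
by apply: (eq_of_sub_eq (assoc_flex x e y)); peirce_eval ex xe ey ye.
Qed.

Lemma peirce_mul22_21 x y : in22 x -> in21 y -> in21 (x ⋆ y) /\ y ⋆ x = 0.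
Proof.
move=> [/= ex xe] [/= ey ye]; split; first by split; peirce_eval ex xe ey ye.
by apply: (eq_of_sub_eq (assoc_flex y e x)); peirce_eval ex xe ey ye.
Qed.

Lemma commr_e12 x : in12 x -> [x, e] = - x.
Proof. by rewrite /commr => -[/= -> ->]; rewrite sub0r. Qed.

Lemma commr_e21 x : in21 x -> [x, e] = x.
Proof. by rewrite /commr => -[/= -> ->]; rewrite subr0. Qed.

Lemma commr2_e_offdiag x : offdiag x -> [[x, e], e] = x.
Proof.
by case=> hx; [rewrite (commr_e12 hx) commrNl (commr_e12 hx) opprK | rewrite !(commr_e21 hx)].
Qed.

Lemma commr12_21_e a y : in12 a -> in21 y -> [[a, y], e] = 0.
Proof.
move=> ha hy; have [[/= ay_e1 ay_e2] [/= ya_e1 ya_e2]] := peirce_mul12_21 ha hy.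
by mul_expand; rewrite ay_e1 ay_e2 ya_e1 ya_e2; zmodule.
Qed.

Lemma commr21_12_e a y : in21 a -> in12 y -> [[a, y], e] = 0.
Proof. by move=> ha hy; rewrite (commrC a y) commrNl commr12_21_e ?oppr0. Qed.

Lemma commr12_12 a b : in12 a -> in12 b -> in21 [a, b].
Proof. by move=> ha hb; apply: in_peirceD; [|apply: in_peirceN]; apply: peirce_mul12_12. Qed.

Lemma commr21_21 a b : in21 a -> in21 b -> in12 [a, b].
Proof. by move=> ha hb; apply: in_peirceD; [|apply: in_peirceN]; apply: peirce_mul21_21. Qed.

Lemma commr_diag12 t u x : in11 t -> in22 u -> in12 x -> in12 [t + u, x].
Proof.
move=> ht hu hx; have [tx xt0] := peirce_mul11_12 ht hx; have [xu ux0] := peirce_mul22_12 hu hx.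
by rewrite /commr mulDx mulxD xt0 ux0 addr0 add0r; apply: in_peirceD => //; apply: in_peirceN.
Qed.

Lemma commr_diag21 t u y : in11 t -> in22 u -> in21 y -> in21 [t + u, y].
Proof.
move=> ht hu hy; have [yt ty0] := peirce_mul11_21 ht hy; have [uy yu0] := peirce_mul22_21 hu hy.
by rewrite /commr mulDx mulxD ty0 yu0 addr0 add0r; apply: in_peirceD => //; apply: in_peirceN.
Qed.

Section CentralDefect.
Variable D : R -> R.
Hypothesis D_lie3 : lie3_derivation mul D.
Hypothesis central_of_commr12 : forall t u, in11 t -> in22 u ->
  (forall x, in12 x -> [t + u, x] = 0) -> central mul (t + u).
Hypothesis central_of_commr21 : forall t u, in11 t -> in22 u ->
  (forall y, in21 y -> [t + u, y] = 0) -> central mul (t + u).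

Local Notation δ := (add_defect D).

(* The first hypothesis puts z in R11 + R22; then [z, x] lies in R12 (resp. R21), where
   [[_, e], e] is the identity. *)
Lemma central_of_diag12 z : [[z, e], e] = 0 ->
  (forall x, in12 x -> [[[z, x], e], e] = 0) -> central mul z.
Proof.
move=> /peirce_diag zE hz; rewrite zE.
apply: central_of_commr12 => [||x hx]; try exact: in_peirce_proj.
have hzx := commr_diag12 (in_peirce_proj _ _ z) (in_peirce_proj _ _ z) hx.
by rewrite -(commr2_e_offdiag (or_introl hzx)) -zE hz.
Qed.

Lemma central_of_diag21 z : [[z, e], e] = 0 ->
  (forall y, in21 y -> [[[z, y], e], e] = 0) -> central mul z.
Proof.
move=> /peirce_diag zE hz; rewrite zE.
apply: central_of_commr21 => [||y hy]; try exact: in_peirce_proj.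
have hzy := commr_diag21 (in_peirce_proj _ _ z) (in_peirce_proj _ _ z) hy.
by rewrite -(commr2_e_offdiag (or_intror hzy)) -zE hz.
Qed.

Lemma commr_e_offdiag x : offdiag x -> [[e, x], e] = - x.
Proof. by move=> hx; rewrite (commrC e x) commrNl commr2_e_offdiag. Qed.

Lemma central_add_defect_e x : offdiag x -> central mul (δ e x).
Proof.
move=> hx; have defect_e : [[δ e x, e], e] = 0.
  by rewrite (add_defect_commr2l D_lie3) commrr commr0l commr2_e_offdiag // add_defect0l.
case: hx => hx; [apply: central_of_diag21 | apply: central_of_diag12] => // y hy.
  by rewrite (add_defect_commr2l D_lie3) (commr_e_offdiag (or_intror hy))
    (commr12_21_e hx hy) (add_defect0r D_lie3) commr0l.
by rewrite (add_defect_commr2l D_lie3) (commr_e_offdiag (or_introl hy))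
  (commr21_12_e hx hy) (add_defect0r D_lie3) commr0l.
Qed.

Lemma lie3_add_offdiag a b : offdiag a -> offdiag b ->
  D (b + a + [[a, - b], e]) = D b + D a + D [[a, - b], e].
Proof.
move=> ha hb; have hNb : offdiag (- b) by case: hb => hb; [left | right]; exact: in_peirceN.
have := lie3_derivation_split D_lie3 e (central_add_defect_e ha) (central_add_defect_e hNb).
rewrite commr2D commrr commr0l (lie3_derivation0 D_lie3).
by rewrite (commr_e_offdiag hNb) opprK (commr2_e_offdiag ha) !add0r.
Qed.

Lemma lie3_additive12_21 a b : in12 a -> in21 b -> D (a + b) = D a + D b.
Proof.
move=> ha hb; rewrite addrC [RHS]addrC.
have := lie3_add_offdiag (or_introl ha) (or_intror hb).
by rewrite (commr12_21_e ha (in_peirceN hb)) (lie3_derivation0 D_lie3) !addr0.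
Qed.

Lemma lie3_additive12_12 a b : in12 a -> in12 b -> D (a + b) = D a + D b.
Proof.
move=> ha hb; have hc := commr12_12 ha (in_peirceN hb); rewrite addrC [RHS]addrC.
have := lie3_add_offdiag (or_introl ha) (or_introl hb).
by rewrite (commr_e21 hc) (lie3_additive12_21 (in_peirceD hb ha) hc) => /addIr.
Qed.

Lemma lie3_additive21_21 a b : in21 a -> in21 b -> D (a + b) = D a + D b.
Proof.
move=> ha hb; have hc := commr21_21 ha (in_peirceN hb); rewrite addrC [RHS]addrC.
have := lie3_add_offdiag (or_intror ha) (or_intror hb).
rewrite (commr_e12 hc) (addrC (b + a)) (lie3_additive12_21 (in_peirceN hc) (in_peirceD hb ha)).
by rewrite (addrC (D (- _))) => /addIr.
Qed.

Lemma add_defect_offdiag_eq0 a b c d : in12 a -> in21 b -> in12 c -> in21 d ->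
  δ (a + b) (c + d) = 0.
Proof.
move=> ha hb hc hd; rewrite /add_defect.
have -> : a + b + (c + d) = (a + c) + (b + d) by zmodule.
rewrite (lie3_additive12_21 (in_peirceD ha hc) (in_peirceD hb hd)) (lie3_additive12_12 ha hc).
by rewrite (lie3_additive21_21 hb hd) (lie3_additive12_21 ha hb) (lie3_additive12_21 hc hd); zmodule.
Qed.

Lemma commr2_e_add_defect a b : [[δ a b, e], e] = 0.
Proof.
by rewrite (add_defect_commr2l D_lie3) !commr2_e add_defect_offdiag_eq0 //; exact: in_peirce_proj.
Qed.

Lemma central_add_defect a b : central mul (δ a b).
Proof.
apply: central_of_diag12 => [|x hx]; first exact: commr2_e_add_defect.
have ex : [e, x] = x by rewrite (commrC e x) (commr_e12 hx) opprK.
by rewrite (commrC _ x) !commrNl -ex (add_defect_commr2r D_lie3) commr2_e_add_defect oppr0.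
Qed.

End CentralDefect.

End Idempotent.
End Alternative.
End NonassociativeRing.

Theorem corollary2p7 (R : zmodType) (mul : R -> R -> R) (e : R) :
  nonassoc_ring mul ->
  alternative mul ->
  nontrivial_idempotent mul e ->
  (forall a11 a22, peirce mul e true true a11 -> peirce mul e false false a22 ->
     (forall x, peirce mul e true false x -> commr mul (a11 + a22) x = 0) ->
     central mul (a11 + a22)) ->
  (forall a11 a22, peirce mul e true true a11 -> peirce mul e false false a22 ->
     (forall x, peirce mul e false true x -> commr mul (a11 + a22) x = 0) ->
     central mul (a11 + a22)) ->
  forall D : R -> R, lie3_derivation mul D ->
  forall a b, central mul (D (a + b) - D a - D b).
Proof.
move=> mul_ring mul_alt [_ [e_idem _]] central12 central21 D D_lie3 a b.
have P := peirceP mul_ring mul_alt e_idem.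
apply: (central_add_defect mul_ring mul_alt e_idem D_lie3).
- by move=> t u /P ht /P hu htu; apply: central12 => // x /P; exact: htu.
- by move=> t u /P ht /P hu htu; apply: central21 => // x /P; exact: htu.
Qed.
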